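(* For an undirected graph $G=(V,E)$ with edge capacities $u_e\in\mathbb{Z}_{\ge0}$ for all $e\in E$, terminals $s_1,s_2,t_1,t_2$, and nonnegative integers $k_1,k_2$, it holds that $2\,c_{2k_1,2k_2}(G)\ge c_{k_1,k_2}(G)$.
   Context: $\delta(S)$ denotes the set of edges with exactly one endpoint in $S$. Say $S\subseteq V$ separates commodity $i$ if exactly one of $s_i,t_i$ lies in $S$. For nonnegative integers $a,b$ define $\mathrm{dem}_{a,b}(S)=a$ if $S$ separates commodity 1 but not commodity 2, $=b$ if $S$ separates commodity 2 but not commodity 1, $=a+b$ if $S$ separates both commodities, and $=0$ otherwise. Define $c_{a,b}(S)=\max\{x\in\mathbb{R}_{\ge0}: \exists\, n(e)\in\mathbb{Z}_{\ge0}\ (e\in\delta(S))\text{ with } n(e)x\le u_e\ \forall e\in\delta(S),\ \sum_{e\in\delta(S)}n(e)\ge \mathrm{dem}_{a,b}(S)\}$ and $c_{a,b}(G)=\min\{c_{a,b}(S): S\subseteq V,\ \mathrm{dem}_{a,b}(S)\neq 0\}$. *)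

From HB Require Import structures.
From mathcomp Require Import all_boot all_order all_algebra.
From mathcomp Require Import reals.
Set Implicit Arguments. Unset Strict Implicit. Unset Printing Implicit Defensive.
Import Order.TTheory GRing.Theory Num.Theory.
Local Open Scope ring_scope.

(* An undirected graph on the finite vertex type V: its edge set E is a set of
   2-element vertex sets.  delta E S = edges with exactly one endpoint in S. *)
Definition delta (V : finType) (E : {set {set V}}) (S : {set V}) : {set {set V}} :=
  [set e in E | #|e :&: S| == 1%N].

Definition separates (V : finType) (S : {set V}) (s t : V) : bool :=
  (s \in S) != (t \in S).

Definition dem (V : finType) (s1 t1 s2 t2 : V) (a b : nat) (S : {set V}) : nat :=
  match separates S s1 t1, separates S s2 t2 with
  | true, false => a
  | false, true => b
  | true, true => (a + b)%N
  | false, false => 0%N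
  end.

Definition cS_feasible (R : realType) (V : finType) (E : {set {set V}})
  (u : {set V} -> nat) (s1 t1 s2 t2 : V) (a b : nat) (S : {set V}) (x : R) : Prop :=
  0 <= x /\
  exists n : {set V} -> nat,
    (forall e, e \in delta E S -> (n e)%:R * x <= (u e)%:R) /\
    (dem s1 t1 s2 t2 a b S <= \sum_(e in delta E S) n e)%N.

Definition is_cS (R : realType) (V : finType) (E : {set {set V}})
  (u : {set V} -> nat) (s1 t1 s2 t2 : V) (a b : nat) (S : {set V}) (c : R) : Prop :=
  cS_feasible E u s1 t1 s2 t2 a b S c /\
  forall y, cS_feasible E u s1 t1 s2 t2 a b S y -> y <= c.

Definition is_cG (R : realType) (V : finType) (E : {set {set V}})
  (u : {set V} -> nat) (s1 t1 s2 t2 : V) (a b : nat) (c : R) : Prop :=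
  (exists S, dem s1 t1 s2 t2 a b S <> 0%N /\ is_cS E u s1 t1 s2 t2 a b S c) /\
  (forall S, dem s1 t1 s2 t2 a b S <> 0%N ->
     exists y, is_cS E u s1 t1 s2 t2 a b S y /\ c <= y).

From HB Require Import structures.
From mathcomp Require Import all_boot all_order all_algebra.
From mathcomp Require Import reals.
Import Order.TTheory GRing.Theory Num.Theory.
Local Open Scope ring_scope.

(* Doubling both demands doubles every cut demand, so doubling the edge
   multiplicities of a witness for x on a cut S gives a witness for x/2 with the
   doubled demands.  On the cut S attaining c_{2k1,2k2}(G) this yields
   c_{k1,k2}(G) <= c_{k1,k2}(S) <= 2 c_{2k1,2k2}(S) = 2 c_{2k1,2k2}(G). *)

Lemma demMn (V : finType) (s1 t1 s2 t2 : V) (m a b : nat) (S : {set V}) :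
  dem s1 t1 s2 t2 (m * a) (m * b) S = (m * dem s1 t1 s2 t2 a b S)%N.
Proof.
by rewrite /dem; case: (separates S s1 t1); case: (separates S s2 t2);
  rewrite ?muln0 ?mulnDr.
Qed.

Lemma demMn_eq0 {V : finType} {s1 t1 s2 t2 : V} {m a b : nat} {S : {set V}} :
  dem s1 t1 s2 t2 (m * a) (m * b) S <> 0%N -> dem s1 t1 s2 t2 a b S <> 0%N.
Proof. by rewrite demMn => dm0 d0; apply: dm0; rewrite d0 muln0. Qed.

Lemma cS_feasible_divn (R : realType) (V : finType) (E : {set {set V}})
  (u : {set V} -> nat) (s1 t1 s2 t2 : V) (m a b : nat) (S : {set V}) (x : R) :
  (0 < m)%N -> cS_feasible E u s1 t1 s2 t2 a b S x ->
  cS_feasible E u s1 t1 s2 t2 (m * a) (m * b) S (x / m%:R).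
Proof.
move=> m_gt0 [x_ge0 [n [n_cap n_dem]]].
have m_neq0 : m%:R != 0 :> R by rewrite pnatr_eq0 -lt0n.
split; first by rewrite divr_ge0.
exists (fun e => (m * n e)%N); split.
- move=> e e_cut; rewrite natrM -mulrA mulrCA (mulrCA _ x) mulfV // mulr1.
  exact: n_cap.
- by rewrite demMn -big_distrr /= leq_mul2l n_dem orbT.
Qed.

Theorem mainTheorem4 (R : realType) (V : finType) (E : {set {set V}})
  (HE : forall e, e \in E -> #|e| = 2%N)
  (u : {set V} -> nat) (s1 t1 s2 t2 : V) (k1 k2 : nat) (c2 c1 : R) :
  is_cG E u s1 t1 s2 t2 (2 * k1)%N (2 * k2)%N c2 ->
  is_cG E u s1 t1 s2 t2 k1 k2 c1 ->
  c1 <= 2 * c2.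
Proof.
move=> [[S [dem2_S [_ c2_max]]] _] [_ c1_min].
have [y [[y_feas _] c1_le_y]] := c1_min S (demMn_eq0 dem2_S).
have y_half_le : y / 2 <= c2 by apply: c2_max; exact: cS_feasible_divn.
apply: (le_trans c1_le_y).
by rewrite -ler_pdivrMl // mulrC.
Qed.
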